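(* Let $n\ge 2$ and $N(x)=1-x$. Then $\mathbf{H}$ is self-dual with respect to $N$: $1-\mathbf{H}(1-x_1,\dots,1-x_n)=\mathbf{H}(x_1,\dots,x_n)$ for all $\mathbf{x}\in[0,1]^n$.
   Context: For $\mathbf{x}\in[0,1]^n$ let $x_{(1)}\ge\dots\ge x_{(n)}$ be its entries in decreasing order, and define the median $Med(\mathbf{x})=\frac12(x_{(k)}+x_{(k+1)})$ if $n=2k$ and $Med(\mathbf{x})=x_{(k+1)}$ if $n=2k+1$. Define $f_i(\mathbf{x})=\frac1n$ if $x_1=\dots=x_n$, and otherwise $f_i(\mathbf{x})=\frac{1}{n-1}\Big(1-\frac{|x_i-Med(\mathbf{x})|}{\sum_{j=1}^n|x_j-Med(\mathbf{x})|}\Big)$. Then $\mathbf{H}(\mathbf{x})=\sum_{i=1}^n f_i(\mathbf{x})\,x_i$. *)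

From mathcomp Require Import all_boot all_order all_algebra.
Set Implicit Arguments. Unset Strict Implicit. Unset Printing Implicit Defensive.
Import Order.TTheory GRing.Theory Num.Theory.
Local Open Scope ring_scope.

(* Entries of x in decreasing order: x_(1) >= ... >= x_(n); the j-th order
   statistic x_(j) (1-based) is (dsort x)`_(j-1). *)
Definition dsort (R : realFieldType) (n : nat) (x : 'I_n -> R) : seq R :=
  sort (fun a b : R => b <= a) [seq x i | i <- enum 'I_n].

(* Med(x) = (x_(k) + x_(k+1))/2 if n = 2k, x_(k+1) if n = 2k+1. *)
Definition Med (R : realFieldType) (n : nat) (x : 'I_n -> R) : R :=
  let s := dsort x in
  let k := n./2 in
  if odd n then s`_k else (s`_k.-1 + s`_k) / 2.

Definition allEq (R : realFieldType) (n : nat) (x : 'I_n -> R) : bool :=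
  [forall i, forall j, x i == x j].

Definition fw (R : realFieldType) (n : nat) (x : 'I_n -> R) (i : 'I_n) : R :=
  if allEq x then 1 / n%:R
  else (1 / (n%:R - 1)) *
       (1 - `|x i - Med x| / (\sum_(j < n) `|x j - Med x|)).

Definition H (R : realFieldType) (n : nat) (x : 'I_n -> R) : R :=
  \sum_(i < n) fw x i * x i.

(* Reflecting every entry, x_i |-> c - x_i, reverses the decreasing order of
   the entries, so the median is reflected as well and every deviation
   |x_i - Med x| is unchanged.  Hence the weights f_i are unchanged, and since
   they sum to 1, H (c - x) = c - H x. *)
From mathcomp Require Import all_boot all_order all_algebra.
From mathcomp Require Import ring zify.
Import Order.TTheory GRing.Theory Num.Theory.
Local Open Scope ring_scope.

Section Reflection.

Variables (R : realFieldType) (n : nat).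
Implicit Types (x : 'I_n -> R) (c : R).

Lemma size_dsort x : size (dsort x) = n.
Proof. by rewrite /dsort size_sort size_map size_enum_ord. Qed.

Lemma dsort_antitone (f : R -> R) x : {mono f : a b /~ a <= b} ->
  dsort (fun i => f (x i)) = map f (rev (dsort x)).
Proof.
move=> f_anti; rewrite /dsort.
rewrite (map_comp f x) sort_map; congr (map _ _).
apply: (@sorted_eq _ (fun a b : R => a <= b)).
- by move=> a b c; apply: le_trans.
- by move=> a b /andP[ab ba]; apply: le_anti; rewrite ab ba.
- have ge_f : relpre f (fun a b : R => b <= a) =2 (fun a b : R => a <= b).
    by move=> a b /=; rewrite f_anti.
  by rewrite -(eq_sorted ge_f); apply: sort_sorted => a b; exact: le_total.
- by rewrite rev_sorted; apply: sort_sorted => a b; exact: le_total.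
- by rewrite perm_sym perm_rev perm_sort perm_sym perm_sort.
Qed.

Lemma dsort_reflect c x :
  dsort (fun i => c - x i) = map (fun a => c - a) (rev (dsort x)).
Proof.
by apply: (@dsort_antitone (fun a => c - a)) => a b; rewrite lerD2l lerN2.
Qed.

Hypothesis n_gt0 : (0 < n)%N.

Lemma Med_reflect c x : Med (fun i => c - x i) = c - Med x.
Proof.
rewrite /Med dsort_reflect; set s := dsort x; set k := n./2.
have n_eq : (odd n + k.*2 = n)%N by rewrite /k odd_double_half.
have nth_s j : (j < n)%N ->
    (map (fun a => c - a) (rev s))`_j = c - s`_(n - j.+1).
  move=> lt_jn; rewrite (nth_map 0) ?size_rev ?size_dsort //.
  by rewrite nth_rev ?size_dsort.
case: ifP n_eq => odd_n n_eq.
  by rewrite nth_s; [congr (c - s`__) | ]; lia.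
rewrite !nth_s; try lia.
have -> : (n - k.-1.+1 = k)%N by lia.
have -> : (n - k.+1 = k.-1)%N by lia.
by field.
Qed.

Lemma allEq_reflect c x : allEq (fun i => c - x i) = allEq x.
Proof.
apply: eq_forallb => a; apply: eq_forallb => b.
by rewrite (can_eq (subKr c)).
Qed.

Lemma fw_reflect c x i : fw (fun i => c - x i) i = fw x i.
Proof.
have dev_reflect j : `|c - x j - Med (fun i => c - x i)| = `|x j - Med x|.
  by rewrite Med_reflect -normrN; congr `|_|; ring.
rewrite /fw allEq_reflect dev_reflect.
by under eq_bigr => j _ do rewrite dev_reflect.
Qed.

Lemma sum_fw x : \sum_(i < n) fw x i = 1.
Proof.
have [allEq_x | not_allEq] := boolP (allEq x).
  under eq_bigr => i _ do rewrite /fw allEq_x.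
  by rewrite sumr_const card_ord -[LHS]mulr_natr mul1r mulVf ?pnatr_eq0 -?lt0n.
have n_gt1 : (1 < n)%N.
  case: ltnP => // le_n1; case/negP: not_allEq.
  apply/'forall_forallP => a b; apply/eqP; congr x; apply/val_inj => /=.
  by move: (ltn_ord a) (ltn_ord b); lia.
under eq_bigr => i _ do rewrite /fw (negbTE not_allEq).
set S := \sum_(j < n) `|x j - Med x|.
have S_neq0 : S != 0.
  apply: contra not_allEq => /eqP S0.
  have x_Med j : x j = Med x.
    by apply/eqP; rewrite -subr_eq0 -normr_eq0 (psumr_eq0P _ S0).
  by apply/'forall_forallP => a b; rewrite !x_Med.
rewrite -mulr_sumr sumrB sumr_const card_ord -mulr_suml -/S mulfV // mul1r.
by rewrite mulVf // subr_eq0 pnatr_eq1; lia.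
Qed.

Lemma H_reflect c x : H (fun i => c - x i) = c - H x.
Proof.
rewrite /H; under eq_bigr => i _ do rewrite fw_reflect mulrBr.
by rewrite sumrB -mulr_suml sum_fw mul1r.
Qed.

End Reflection.

Theorem proposition17 (R : realFieldType) (n : nat) (hn : (2 <= n)%N)
  (x : 'I_n -> R) (hx : forall i, 0 <= x i <= 1) :
  1 - H (fun i => 1 - x i) = H x.
Proof. by rewrite H_reflect 1?ltnW // subKr. Qed.
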